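(* For every $\epsilon>0$, every connected graph admits a proper straight-line drawing with spanning ratio smaller than $1+\epsilon$.
   Context: A straight-line drawing maps vertices to distinct points of the plane and edges to straight-line segments between their end-vertices; it is proper if no edge contains a vertex other than its end-vertices. In a straight-line drawing $\Gamma$, $\pi_\Gamma(u,v)$ is the minimum total Euclidean length of a path between $u$ and $v$, $\|uv\|_\Gamma$ is their Euclidean distance, and the spanning ratio is $\max_{u\neq v}\pi_\Gamma(u,v)/\|uv\|_\Gamma$. *)

From HB Require Import structures.
From mathcomp Require Import all_boot all_order all_algebra.
From mathcomp Require Import classical_sets reals.
Set Implicit Arguments. Unset Strict Implicit. Unset Printing Implicit Defensive.
Import Order.TTheory GRing.Theory Num.Theory.
Local Open Scope ring_scope.
Local Open Scope classical_set_scope.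

Definition edist {R : realType} (a b : R * R) : R :=
  Num.sqrt ((a.1 - b.1) ^+ 2 + (a.2 - b.2) ^+ 2).

Definition simple_graph {V : finType} (e : rel V) : Prop :=
  symmetric e /\ irreflexive e.

Definition connected_graph {V : finType} (e : rel V) : Prop :=
  forall u v : V, connect e u v.

Definition on_segment {R : realType} (a b c : R * R) : Prop :=
  exists t : R, 0 <= t <= 1 /\
    c = (a.1 + t * (b.1 - a.1), a.2 + t * (b.2 - a.2)).

Definition proper_drawing {R : realType} {V : finType} (e : rel V)
  (p : V -> R * R) : Prop :=
  injective p /\
  forall u v w : V, e u v -> w != u -> w != v -> ~ on_segment (p u) (p v) (p w).

Fixpoint walk_length {R : realType} {V : finType} (p : V -> R * R)
  (u : V) (s : seq V) : R :=
  match s with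
  | [::] => 0
  | x :: s' => edist (p u) (p x) + walk_length p x s'
  end.

Definition path_dist {R : realType} {V : finType} (e : rel V)
  (p : V -> R * R) (u v : V) : R :=
  inf [set x : R | exists s : seq V,
        path e u s /\ last u s = v /\ x = walk_length p u s].

(* spanning ratio: max over u <> v of pi(u,v)/||uv|| (0 if < 2 vertices) *)
Definition spanning_ratio {R : realType} {V : finType} (e : rel V)
  (p : V -> R * R) : R :=
  \big[Num.max/0]_(u : V) \big[Num.max/0]_(v : V | v != u)
     (path_dist e p u v / edist (p u) (p v)).

(* Rank the vertices injectively so that every vertex other than the one of
   least rank has a neighbour of smaller rank (breadth-first distance from a
   root, ties broken by enumeration), and draw the vertex of rank k at
   (K^k, K^2k) on the parabola y = x^2; no three points of a parabola are
   collinear, so the drawing is proper.  For vertices t, o of ranks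
   f o < f t = a, step from t to a neighbour of smaller rank and then follow
   a walk of at most 2 max f edges through vertices of rank < a.  All its
   points except t lie in [0, L] x [0, L^2] with L = K^(a-1), so its length
   is at most K L + (K L)^2 + O(L^2), whereas t and o are at vertical
   distance at least (K L)^2 - L^2.  For K large enough (depending on eps and
   max f) the ratio is below 1 + eps. *)

From mathcomp Require Import all_boot all_order all_algebra.
From mathcomp Require Import classical_sets reals.
From mathcomp Require Import ring lra zify.
Set Implicit Arguments. Unset Strict Implicit. Unset Printing Implicit Defensive.
Import Order.TTheory GRing.Theory Num.Theory.

Lemma last_rev_belast (T : Type) (x : T) s : last (last x s) (rev (belast x s)) = x.
Proof.
by case/lastP: s => //= s z; rewrite belast_rcons last_rcons rev_cons last_rcons.
Qed.

Section DescendingWalks.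
Variables (V : finType) (e : rel V) (f : V -> nat).
Hypothesis e_sym : symmetric e.
Hypothesis f_inj : injective f.
Hypothesis f_descent : forall u v, f u < f v -> exists2 w, e v w & f w < f v.

Lemma descending_walk x : exists s, [/\ path e x s, all (fun z => f z <= f x) s,
  size s <= f x & forall u, f (last x s) <= f u].
Proof.
have [n] := ubnP (f x); elim: n x => // n IH x fx_lt.
case: (pickP (fun u => f u < f x)) => [u fu_lt | fx_min]; last first.
  by exists [::]; split=> // u; rewrite leqNgt fx_min.
have [w e_xw fw_lt] := f_descent fu_lt.
have [s [ps all_s size_s last_min]] := IH w (leq_trans fw_lt fx_lt).
exists (w :: s); split=> //=; first by rewrite e_xw.
  rewrite (ltnW fw_lt); apply: sub_all all_s => z /= /leq_trans; apply; exact: ltnW.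
exact: leq_ltn_trans size_s fw_lt.
Qed.

Lemma low_walk x y : exists s, [/\ path e x s, last x s = y,
  all (fun z => f z <= maxn (f x) (f y)) s & size s <= f x + f y].
Proof.
have [sx [px ax zx mx]] := descending_walk x.
have [sy [py ay zy my]] := descending_walk y.
have same_end : last x sx = last y sy.
  by apply: f_inj; apply/eqP; rewrite eqn_leq mx my.
exists (sx ++ rev (belast y sy)); split.
- rewrite cat_path px same_end rev_path; apply: sub_path py => a b /=; by rewrite e_sym.
- by rewrite last_cat same_end last_rev_belast.
- rewrite all_cat; apply/andP; split.
    by apply: sub_all ax => z /= fz; rewrite leq_max fz.
  apply/allP => z; rewrite mem_rev => /mem_belast; rewrite inE leq_max.
  by case/predU1P => [-> | /(allP ay) ->]; rewrite ?leqnn orbT.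
- by rewrite size_cat size_rev size_belast; lia.
Qed.

End DescendingWalks.

Section BreadthFirstRank.
Variables (V : finType) (e : rel V).
Hypothesis e_sym : symmetric e.
Hypothesis e_conn : connected_graph e.
Variable r : V.

(* Walks are encoded as tuples so that this is a boolean predicate of [k],
   as [ex_minn] requires. *)
Definition walk_of_size v k := [exists s : k.-tuple V, path e r s && (last r s == v)].

Lemma walk_of_size_exists v : exists k, walk_of_size v k.
Proof.
case/connectP: (e_conn r v) => s ps ->; exists (size s); apply/existsP.
by exists (in_tuple s); rewrite ps eqxx.
Qed.

Definition graph_dist v := ex_minn (walk_of_size_exists v).

Lemma graph_dist_le s : path e r s -> graph_dist (last r s) <= size s.
Proof.
move=> ps; rewrite /graph_dist; case: ex_minnP => m _; apply.
by apply/existsP; exists (in_tuple s); rewrite ps eqxx.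
Qed.

Lemma graph_dist_walk v :
  exists s, [/\ path e r s, last r s = v & size s = graph_dist v].
Proof.
rewrite /graph_dist; case: ex_minnP => m /existsP [[s /= /eqP size_s]].
by case/andP => ps /eqP ls _; exists s.
Qed.

Lemma graph_dist_root : graph_dist r = 0.
Proof. by apply/eqP; rewrite -leqn0 (graph_dist_le (s := [::])). Qed.

Lemma graph_dist_eq0 v : graph_dist v = 0 -> v = r.
Proof.
by move=> d0; have [s [_ ls]] := graph_dist_walk v; rewrite d0 -ls => /size0nil ->.
Qed.

Lemma graph_dist_pred v : v != r -> exists2 w, e v w & graph_dist w < graph_dist v.
Proof.
move=> vr; have [s [ps ls <-]] := graph_dist_walk v.
case/lastP: s ps ls => [_ lr | s z]; first by rewrite -lr eqxx in vr.
rewrite rcons_path last_rcons size_rcons => /andP [ps e_z] <-.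
by exists (last r s); [rewrite e_sym | exact: graph_dist_le].
Qed.

Definition bfs_rank v := graph_dist v * #|V| + enum_rank v.

Lemma bfs_rank_inj : injective bfs_rank.
Proof.
move=> u v eq_uv; apply/enum_rank_inj/ord_inj.
by have := congr1 (modn^~ #|V|) eq_uv; rewrite /= !modnMDl !modn_small.
Qed.

Lemma bfs_rank_descent u v : bfs_rank u < bfs_rank v ->
  exists2 w, e v w & bfs_rank w < bfs_rank v.
Proof.
have rank_lt (z : V) : nat_of_ord (enum_rank z) < #|V| by exact: ltn_ord.
have := rank_lt v; have := rank_lt u; rewrite /bfs_rank => ru rv uv.
case: (eqVneq v r) => [vr | /graph_dist_pred [w e_vw dw]]; last first.
  by exists w => //; have := rank_lt w; nia.
have du0 : graph_dist u = 0 by move: uv rv; rewrite vr graph_dist_root; nia.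
by move: uv; rewrite (graph_dist_eq0 du0) -vr ltnn.
Qed.

End BreadthFirstRank.

Lemma exists_descending_rank (V : finType) (e : rel V) :
  symmetric e -> connected_graph e ->
  exists f : V -> nat, injective f /\
    forall u v, f u < f v -> exists2 w, e v w & f w < f v.
Proof.
move=> e_sym e_conn; case: (pickP (@predT V)) => [r _ | V0].
  exists (bfs_rank e_conn r); split; [exact: bfs_rank_inj | exact: bfs_rank_descent].
by exists (fun=> 0%N); split=> [u | u]; have := V0 u.
Qed.

Local Open Scope ring_scope.

Section EuclideanPlane.
Variable R : realType.
Implicit Types (a b : R * R) (x y z : R).

Lemma edistC a b : edist a b = edist b a.
Proof. by rewrite /edist -(sqrrN (a.1 - b.1)) -(sqrrN (a.2 - b.2)) !opprB. Qed.

Lemma edist_ge0 a b : 0 <= edist a b.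
Proof. exact: sqrtr_ge0. Qed.

Lemma edist_gt0 a b : a != b -> 0 < edist a b.
Proof.
move=> ab; rewrite sqrtr_gt0 lt_def addr_ge0 ?sqr_ge0 // andbT.
rewrite paddr_eq0 ?sqr_ge0 // !sqrf_eq0 !subr_eq0.
by case: a b ab => [a1 a2] [b1 b2] /=; apply: contra => /andP [/eqP -> /eqP ->].
Qed.

Lemma edist_le_sum_norm a b : edist a b <= `|a.1 - b.1| + `|a.2 - b.2|.
Proof.
rewrite /edist; set x := a.1 - b.1; set y := a.2 - b.2.
have x_ge0 := normr_ge0 x; have y_ge0 := normr_ge0 y.
apply: le_trans (ler_wsqrtr (_ : _ <= (`|x| + `|y|) ^+ 2)) _.
  by rewrite -(real_normK (num_real x)) -(real_normK (num_real y)); nra.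
by rewrite sqrtr_sqr ger0_norm // addr_ge0.
Qed.

Lemma norm_sub2_le_edist a b : `|a.2 - b.2| <= edist a b.
Proof. by rewrite /edist -sqrtr_sqr ler_wsqrtr // lerDr sqr_ge0. Qed.

Definition parabola x : R * R := (x, x ^+ 2).

Lemma parabola_on_segment x y z :
  on_segment (parabola x) (parabola y) (parabola z) -> z = x \/ z = y.
Proof.
case=> t [_ [/= zE z2E]].
have : (t ^+ 2 - t) * (y - x) ^+ 2 = 0.
  have -> : (t ^+ 2 - t) * (y - x) ^+ 2 =
    (x + t * (y - x)) ^+ 2 - (x ^+ 2 + t * (y ^+ 2 - x ^+ 2)) by ring.
  by rewrite -zE -z2E subrr.
have -> : t ^+ 2 - t = t * (t - 1) by ring.
move/eqP; rewrite mulf_eq0 sqrf_eq0 mulf_eq0 !subr_eq0 => /orP [/orP [] | ] /eqP tE.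
- by left; rewrite zE tE; ring.
- by right; rewrite zE tE; ring.
- by left; rewrite zE tE; ring.
Qed.

Lemma edist_parabola_le x y m : 0 <= x <= m -> 0 <= y <= m ->
  edist (parabola x) (parabola y) <= m + m ^+ 2.
Proof.
move=> /andP [x_ge0 x_le] /andP [y_ge0 y_le].
apply: le_trans (edist_le_sum_norm _ _) _; rewrite /= lerD // ler_norml; nra.
Qed.

(* The left side bounds the length of the detour walk of [path_dist_descent],
   the right side is (1 + eps) times the vertical gap it has to beat. *)
Lemma detour_bound (eps N K L : R) : 0 < eps -> 0 <= N -> 1 < K -> 1 <= L ->
  2 * N + 2 + eps <= eps * K ->
  K * L + (K * L) ^+ 2 + N * (L + L ^+ 2) < (1 + eps) * ((K * L) ^+ 2 - L ^+ 2).
Proof.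
move=> eps_gt0 N_ge0 K_gt1 L_ge1 K_large.
have L_le_sqr : L <= L ^+ 2 by rewrite expr2 ler_peMr //; lra.
have lhs_le : K * L + (K * L) ^+ 2 + N * (L + L ^+ 2) <= (K + K ^+ 2 + 2 * N) * L ^+ 2.
  by rewrite exprMn; nra.
have coef_lt : K + K ^+ 2 + 2 * N < (1 + eps) * (K ^+ 2 - 1).
  have : K * (2 * N + 2 + eps) <= K * (eps * K) by rewrite ler_pM2l; lra.
  nra.
apply: le_lt_trans lhs_le _.
have -> : (1 + eps) * ((K * L) ^+ 2 - L ^+ 2) = (1 + eps) * (K ^+ 2 - 1) * L ^+ 2.
  by ring.
by rewrite ltr_pM2r // exprn_gt0 //; lra.
Qed.

End EuclideanPlane.

Section Drawings.
Variables (R : realType) (V : finType) (e : rel V).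
Implicit Types (p : V -> R * R) (s : seq V).

Lemma walk_length_ge0 p u s : 0 <= walk_length p u s.
Proof. by elim: s u => //= x s IH u; rewrite addr_ge0 // edist_ge0. Qed.

Lemma walk_length_rcons p u s x :
  walk_length p u (rcons s x) = walk_length p u s + edist (p (last u s)) (p x).
Proof. by elim: s u => /= [|y s IH] u; rewrite ?add0r ?addr0 // IH addrA. Qed.

Lemma walk_length_rev p x s :
  walk_length p (last x s) (rev (belast x s)) = walk_length p x s.
Proof.
elim: s x => //= y s IH x.
by rewrite rev_cons walk_length_rcons IH last_rev_belast edistC addrC.
Qed.

Lemma walk_length_le p (P : pred V) m u s :
  {in P &, forall x y, edist (p x) (p y) <= m} -> all P (u :: s) ->
  walk_length p u s <= (size s)%:R * m.
Proof.
move=> le_m; elim: s u => /= [|x s IH] u; first by rewrite mul0r.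
case/and3P => Pu Px Ps; rewrite -add1n natrD mulrDl mul1r lerD ?le_m //.
by apply: IH; rewrite /= Px.
Qed.

Lemma path_dist_le_walk p x s :
  path e x s -> path_dist e p x (last x s) <= walk_length p x s.
Proof.
move=> ps; apply: ge_inf; last by exists s.
by exists 0 => _ [s' [_ [_ ->]]]; exact: walk_length_ge0.
Qed.

Lemma path_dist_le_rev_walk p x s : symmetric e ->
  path e x s -> path_dist e p (last x s) x <= walk_length p x s.
Proof.
move=> e_sym ps; have := @path_dist_le_walk p (last x s) (rev (belast x s)).
rewrite last_rev_belast walk_length_rev; apply.
by rewrite rev_path; apply: sub_path ps => a b /=; rewrite e_sym.
Qed.

Lemma proper_drawing_parabola (g : V -> R) :
  injective g -> proper_drawing e (fun v => parabola (g v)).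
Proof.
move=> g_inj; split=> [u v /(congr1 fst) /g_inj // | u v w _ wu wv].
by case/parabola_on_segment => /g_inj wE; [move: wu | move: wv]; rewrite wE eqxx.
Qed.

Lemma spanning_ratio_lt p (c : R) : 0 < c -> injective p ->
  (forall u v, u != v -> path_dist e p u v < c * edist (p u) (p v)) ->
  spanning_ratio e p < c.
Proof.
move=> c_gt0 p_inj lt_c; apply: bigmax_lt => // u _; apply: bigmax_lt => // v vu.
have d_gt0 : 0 < edist (p u) (p v) by rewrite edist_gt0 // (inj_eq p_inj) eq_sym.
by rewrite ltr_pdivrMr // lt_c // eq_sym.
Qed.

End Drawings.

Section ParabolaDrawing.
Variables (R : realType) (V : finType) (e : rel V) (f : V -> nat).
Variables (n : nat) (eps K : R).
Hypothesis e_sym : symmetric e.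
Hypothesis f_inj : injective f.
Hypothesis f_descent : forall u v, (f u < f v)%N -> exists2 w, e v w & (f w < f v)%N.
Hypothesis f_le : forall v, (f v <= n)%N.
Hypothesis eps_gt0 : 0 < eps.
Hypothesis K_gt1 : 1 < K.
Hypothesis K_large : 2 * (2 * n)%:R + 2 + eps <= eps * K.

Let K_ge1 : 1 <= K := ltW K_gt1.
Let K_ge0 : 0 <= K := le_trans ler01 K_ge1.
Let p v := parabola (K ^+ f v).

Lemma expr_rank_bound c v : (f v <= c)%N -> 0 <= K ^+ f v <= K ^+ c.
Proof. by move=> fv_le; rewrite exprn_ge0 ?ler_weXn2l. Qed.

Lemma low_walk_length c x y : (f x <= c)%N -> (f y <= c)%N ->
  exists2 s, path e x s /\ last x s = y &
    walk_length p x s <= (2 * n)%:R * (K ^+ c + (K ^+ c) ^+ 2).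
Proof.
move=> fx fy; have [s [ps ls all_s size_s]] := low_walk e_sym f_inj f_descent x y.
exists s => //; set P := [pred z | (f z <= c)%N].
have all_P : all P (x :: s).
  rewrite /= fx; apply: sub_all all_s => z /= /leq_trans; apply.
  by rewrite geq_max fx fy.
apply: le_trans (walk_length_le (m := K ^+ c + (K ^+ c) ^+ 2) _ all_P) _.
  move=> a b; rewrite !inE => fa fb.
  by apply: edist_parabola_le; apply: expr_rank_bound.
apply: ler_wpM2r; first by rewrite addr_ge0 ?sqr_ge0 // exprn_ge0.
by rewrite ler_nat; have := f_le x; have := f_le y; lia.
Qed.

Lemma path_dist_descent t o : (f o < f t)%N ->
  path_dist e p t o < (1 + eps) * edist (p t) (p o) /\
  path_dist e p o t < (1 + eps) * edist (p t) (p o).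
Proof.
move=> fo_lt; have [w e_tw fw_lt] := f_descent fo_lt.
set c := (f t).-1; set L := K ^+ c.
have below z : (f z < f t)%N -> (f z <= c)%N by rewrite /c; lia.
have ft_eq : K ^+ f t = K * L by rewrite /L -exprS /c prednK // (leq_ltn_trans _ fo_lt).
have L_ge1 : 1 <= L by rewrite exprn_ege1 // ltW.
have L_ge0 : 0 <= L := le_trans ler01 L_ge1.
have L_le : L <= K * L by rewrite ler_peMl.
have [s [ps ls] len_s] := low_walk_length (below _ fw_lt) (below _ fo_lt).
have W_le : walk_length p t (w :: s) <=
    K * L + (K * L) ^+ 2 + (2 * n)%:R * (L + L ^+ 2).
  rewrite /= lerD // /p ft_eq edist_parabola_le //; first by rewrite lexx mulr_ge0.
  have /andP [fw_ge0 fw_le] : 0 <= K ^+ f w <= L := expr_rank_bound (below _ fw_lt).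
  by rewrite fw_ge0 (le_trans fw_le L_le).
have D_ge : (K * L) ^+ 2 - L ^+ 2 <= edist (p t) (p o).
  apply: le_trans (norm_sub2_le_edist _ _); rewrite /= ft_eq.
  have /andP [fo_ge0 fo_le] : 0 <= K ^+ f o <= L := expr_rank_bound (below _ fo_lt).
  apply: le_trans (ler_norm _); nra.
have W_lt : walk_length p t (w :: s) < (1 + eps) * edist (p t) (p o).
  apply: le_lt_trans W_le _.
  apply: lt_le_trans (detour_bound eps_gt0 (ler0n _ _) K_gt1 L_ge1 K_large) _.
  by apply: ler_wpM2l => //; rewrite addr_ge0 // ltW.
have last_o : last t (w :: s) = o by [].
have tws : path e t (w :: s) by rewrite /= e_tw.
split; apply: le_lt_trans W_lt; rewrite -{1}last_o.
  exact: path_dist_le_walk tws.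
exact: path_dist_le_rev_walk e_sym tws.
Qed.

Lemma path_dist_parabola_lt u v : u != v ->
  path_dist e p u v < (1 + eps) * edist (p u) (p v).
Proof.
move=> uv; have : f u != f v by rewrite (inj_eq f_inj).
case: ltngtP => // [fu_lt | fv_lt] _.
  by rewrite edistC; have [] := path_dist_descent fu_lt.
by have [] := path_dist_descent fv_lt.
Qed.

End ParabolaDrawing.

Theorem theorem5 (R : realType) (eps : R) (heps : 0 < eps)
  (V : finType) (e : rel V) :
  simple_graph e -> connected_graph e ->
  exists p : V -> R * R,
    proper_drawing e p /\ spanning_ratio e p < 1 + eps.
Proof.
move=> [e_sym _] e_conn.
have [f [f_inj f_descent]] := exists_descending_rank e_sym e_conn.
pose n := (\max_v f v)%N.
have f_le v : (f v <= n)%N := leq_bigmax v.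
pose K := 1 + (2 * (2 * n)%:R + 2) / eps.
have size_bound_ge0 : 0 <= (2 * n)%:R :> R := ler0n _ _.
have K_gt1 : 1 < K by rewrite ltrDl divr_gt0 //; lra.
have K_large : 2 * (2 * n)%:R + 2 + eps <= eps * K.
  by rewrite /K mulrDr mulr1 mulrCA divff ?mulr1 ?gt_eqF // addrC.
have rank_inj : injective (fun v => K ^+ f v).
  by apply: inj_comp f_inj; apply: ieexprIn; [lra | rewrite gt_eqF].
have proper := proper_drawing_parabola e rank_inj.
exists (fun v => parabola (K ^+ f v)); split => //.
apply: spanning_ratio_lt proper.1 _ => [|u v]; first lra.
exact: path_dist_parabola_lt.
Qed.
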